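(* Let $\lambda\ge1$ and let $f(z)=z+\sum_{n\ge2}a_nz^n\in\mathcal B_\Sigma(\lambda,\varphi_0)$, where $\varphi_0(z)=\frac{1+z}{1-z}$. Then $|a_3|\le\dfrac{2}{2\lambda+1}$ and $|a_3-a_2^2|\le\dfrac{2}{2\lambda+1}$.
   Context: Let $\mathbb U=\{z\in\mathbb C:|z|<1\}$; $\Sigma$ is the class of $f(z)=z+\sum_{n\ge2}a_nz^n$ analytic and univalent in $\mathbb U$ whose inverse extends to an analytic univalent function $g=f^{-1}$ on $\mathbb U$. $F\prec G$ means $F=G\circ w$ for some analytic $w:\mathbb U\to\mathbb U$ with $w(0)=0$. $\mathcal B_\Sigma(\lambda,\varphi_0)$ is the set of $f\in\Sigma$ with $(1-\lambda)\frac{f(z)}{z}+\lambda f'(z)\prec\frac{1+z}{1-z}$ and $(1-\lambda)\frac{g(w)}{w}+\lambda g'(w)\prec\frac{1+w}{1-w}$, $g=f^{-1}$. *)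

From Stdlib Require Import Reals.
Open Scope R_scope.

Definition Cplx : Type := (R * R)%type.
Definition Cre (z : Cplx) : R := fst z.
Definition Cim (z : Cplx) : R := snd z.
Definition RtoC (x : R) : Cplx := (x, 0).
Definition C0 : Cplx := (0, 0).
Definition C1 : Cplx := (1, 0).
Definition Cadd (z w : Cplx) : Cplx := (fst z + fst w, snd z + snd w).
Definition Copp (z : Cplx) : Cplx := (- fst z, - snd z).
Definition Csub (z w : Cplx) : Cplx := Cadd z (Copp w).
Definition Cmul (z w : Cplx) : Cplx :=
  (fst z * fst w - snd z * snd w, fst z * snd w + snd z * fst w).
Definition Cinv (z : Cplx) : Cplx :=
  (fst z / (fst z ^ 2 + snd z ^ 2), - snd z / (fst z ^ 2 + snd z ^ 2)).
Definition Cdiv (z w : Cplx) : Cplx := Cmul z (Cinv w).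
Definition Cnorm (z : Cplx) : R := sqrt (fst z ^ 2 + snd z ^ 2).
Fixpoint Cpow (z : Cplx) (n : nat) : Cplx :=
  match n with O => C1 | S m => Cmul z (Cpow z m) end.

Fixpoint Cpsum (u : nat -> Cplx) (n : nat) : Cplx :=
  match n with O => u O | S m => Cadd (Cpsum u m) (u (S m)) end.

Definition Chas_sum (u : nat -> Cplx) (s : Cplx) : Prop :=
  forall eps : R, 0 < eps -> exists N : nat, forall n : nat, (N <= n)%nat ->
    Cnorm (Csub (Cpsum u n) s) < eps.

Definition inU (z : Cplx) : Prop := Cnorm z < 1.

Definition series_on_U (a : nat -> Cplx) (F : Cplx -> Cplx) : Prop :=
  forall z, inU z -> Chas_sum (fun n => Cmul (a n) (Cpow z n)) (F z).

Definition analytic_on_U (F : Cplx -> Cplx) : Prop :=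
  exists a : nat -> Cplx, series_on_U a F.

Definition univalent_on_U (F : Cplx -> Cplx) : Prop :=
  forall z1 z2, inU z1 -> inU z2 -> F z1 = F z2 -> z1 = z2.

Definition Cderiv (F : Cplx -> Cplx) (z L : Cplx) : Prop :=
  forall eps : R, 0 < eps -> exists delta : R, 0 < delta /\
    forall h : Cplx, 0 < Cnorm h -> Cnorm h < delta ->
      Cnorm (Csub (Cdiv (Csub (F (Cadd z h)) (F z)) h) L) < eps.

Definition schwarz (w : Cplx -> Cplx) : Prop :=
  analytic_on_U w /\ w C0 = C0 /\ (forall z, inU z -> inU (w z)).

Definition phi0 (z : Cplx) : Cplx := Cdiv (Cadd C1 z) (Csub C1 z).

(** Subordination F < G on U.  F may have a removable singularity at 0
    (as z |-> f(z)/z does), so the identity is required on U \ {0};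
    by continuity this is the same as on U. *)
Definition subordinate (F G : Cplx -> Cplx) : Prop :=
  exists w : Cplx -> Cplx, schwarz w /\
    forall z, inU z -> z <> C0 -> F z = G (w z).

(** f(z) = sum a_n z^n, with a_0 = 0, a_1 = 1, analytic and univalent on U,
    whose inverse extends to an analytic univalent g on U (g = f^{-1} near 0). *)
Definition in_Sigma (a : nat -> Cplx) (f g : Cplx -> Cplx) : Prop :=
  a O = C0 /\ a 1%nat = C1 /\ series_on_U a f /\ univalent_on_U f /\
  analytic_on_U g /\ univalent_on_U g /\
  (exists r : R, 0 < r /\ forall w, Cnorm w < r -> inU (g w) /\ f (g w) = w).

Definition bazil (lam : R) (F Fp : Cplx -> Cplx) (z : Cplx) : Cplx :=
  Cadd (Cmul (RtoC (1 - lam)) (Cdiv (F z) z)) (Cmul (RtoC lam) (Fp z)).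

Definition in_B_Sigma (lam : R) (a : nat -> Cplx) (f g : Cplx -> Cplx) : Prop :=
  in_Sigma a f g /\
  (exists fp : Cplx -> Cplx, (forall z, inU z -> Cderiv f z (fp z)) /\
     subordinate (bazil lam f fp) phi0) /\
  (exists gp : Cplx -> Cplx, (forall w, inU w -> Cderiv g w (gp w)) /\
     subordinate (bazil lam g gp) phi0).

From Stdlib Require Import Reals Lra Lia Psatz Arith.
From Coquelicot Require Import Coquelicot.
Open Scope R_scope.

(* Write the subordination for [f] as [p = phi0 o w], where
   [p z = (1 - lam) f(z)/z + lam f'(z)] and [w] is a Schwarz function with coefficients
   [c_n].  Comparing the expansions of [p (1 - w) = 1 + w] to second order as [t -> 0+]
   along the real axis gives [(1 + 2 lam) a_3 = 2 (c_2 + c_1^2)], and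
   [|c_2 + c_1^2| <= 1] because [|c_2| <= 1 - |c_1|^2].  The latter follows, without any
   maximum principle, from the Bessel inequality for [w(z)(1 + s z)] over the circle
   [|z| = r] (discretised at roots of unity), optimised over [s], letting [r -> 1].
   Comparing coefficients in [f (g w) = w] gives [b_3 = 2 a_2^2 - a_3] for the inverse
   [g], which lies in the same class, so [|2 a_2^2 - a_3|] obeys the same bound; finally
   [a_3 - a_2^2 = (a_3 - (2 a_2^2 - a_3)) / 2]. *)

Lemma Chas_sumE u s : Chas_sum u s <-> forall eps, 0 < eps -> exists N, forall n, (N <= n)%nat ->
  Cmod (Cpsum u n - s)%C < eps.
Proof. reflexivity. Qed.

Lemma Cmod_sub_le a b : Cmod (a - b)%C <= Cmod a + Cmod b.
Proof.
  unfold Cminus. eapply Rle_trans. apply Cmod_triangle. rewrite Cmod_opp. lra.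
Qed.

Lemma Cmod_sub_tri a b c : Cmod (a - b)%C <= Cmod (a - c)%C + Cmod (c - b)%C.
Proof.
  replace (a - b)%C with ((a - c) + (c - b))%C by ring. apply Cmod_triangle.
Qed.

Lemma Cmod_RtoC t : 0 <= t -> Cmod (RtoC t) = t.
Proof. intros. rewrite Cmod_R. apply Rabs_pos_eq; auto. Qed.

Lemma RtoC_neq0 t : 0 < t -> RtoC t <> RtoC 0.
Proof. intros Ht E. apply RtoC_inj in E. lra. Qed.

Lemma inU_RtoC t : 0 <= t < 1 -> inU (RtoC t).
Proof. intros Ht. unfold inU. change (Cmod (RtoC t) < 1). rewrite Cmod_RtoC; lra. Qed.

Lemma Cpsum_ext (u v : nat -> C) K : (forall n, u n = v n) -> Cpsum u K = Cpsum v K.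
Proof. intros H. induction K; simpl. apply H. rewrite IHK, H. auto. Qed.

Lemma Cpsum_minus (u v : nat -> C) n :
  Cpsum (fun k => u k - v k)%C n = (Cpsum u n - Cpsum v n)%C.
Proof.
  induction n. reflexivity. simpl Cpsum. rewrite IHn.
  change ((Cpsum u n - Cpsum v n) + (u (S n) - v (S n)) =
          (Cpsum u n + u (S n)) - (Cpsum v n + v (S n)))%C. ring.
Qed.

Lemma Cpsum_mult_r (u : nat -> C) y K :
  (Cpsum u K * y)%C = Cpsum (fun n => u n * y)%C K.
Proof.
  induction K. reflexivity.
  change ((Cpsum u K + u (S K)) * y = Cpsum (fun n => u n * y)%C K + u (S K) * y)%C.
  rewrite <- IHK. ring.
Qed.

Lemma Cpsum2 (u : nat -> C) : Cpsum u 2 = (u 0%nat + u 1%nat + u 2%nat)%C.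
Proof. reflexivity. Qed.

Lemma Cpsum3 (u : nat -> C) : Cpsum u 3 = (u 0%nat + u 1%nat + u 2%nat + u 3%nat)%C.
Proof. reflexivity. Qed.

Lemma Chas_sum_minus (u v : nat -> C) s r : Chas_sum u s -> Chas_sum v r ->
  Chas_sum (fun k => u k - v k)%C (s - r)%C.
Proof.
  rewrite !Chas_sumE. intros Hu Hv eps He.
  destruct (Hu (eps/2) ltac:(lra)) as [N1 H1]. destruct (Hv (eps/2) ltac:(lra)) as [N2 H2].
  exists (N1 + N2)%nat. intros n Hn. rewrite Cpsum_minus.
  specialize (H1 n ltac:(lia)). specialize (H2 n ltac:(lia)).
  replace (Cpsum u n - Cpsum v n - (s - r))%C with
    ((Cpsum u n - s) - (Cpsum v n - r))%C by ring.
  pose proof (Cmod_sub_le (Cpsum u n - s)%C (Cpsum v n - r)%C). lra.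
Qed.

Lemma Chas_sum_bounded u s : Chas_sum u s -> exists M, forall n, Cmod (u n) <= M.
Proof.
  intros H. destruct (H 1 Rlt_0_1) as [N HN].
  exists (sum_f_R0 (fun k => Cmod (u k)) N + 2). intros n.
  assert (Hsum0 := cond_pos_sum (fun k => Cmod (u k)) N (fun k => Cmod_ge_0 _)).
  destruct (le_lt_dec n N) as [Hn|Hn].
  - assert (Hterm : forall m, (n <= m)%nat -> Cmod (u n) <= sum_f_R0 (fun k => Cmod (u k)) m).
    { induction m; intros Hm.
      - replace n with 0%nat by lia. simpl. lra.
      - destruct (Nat.eq_dec n (S m)) as [->|Hne]; simpl.
        + pose proof (cond_pos_sum (fun k => Cmod (u k)) m (fun k => Cmod_ge_0 _)). lra.
        + pose proof (Cmod_ge_0 (u (S m))). specialize (IHm ltac:(lia)). lra. }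
    specialize (Hterm N Hn). lra.
  - destruct n as [|m]. lia.
    pose proof (HN (S m) ltac:(lia)) as H1. pose proof (HN m ltac:(lia)) as H2.
    change (Cmod (Cpsum u m + u (S m) - s)%C < 1) in H1.
    change (Cmod (Cpsum u m - s)%C < 1) in H2.
    replace (u (S m)) with ((Cpsum u m + u (S m) - s) - (Cpsum u m - s))%C by ring.
    pose proof (Cmod_sub_le (Cpsum u m + u (S m) - s)%C (Cpsum u m - s)%C). lra.
Qed.

Lemma Chas_sum_tail_geom u s K B q : Chas_sum u s -> 0 <= q < 1 ->
  (forall n, (K < n)%nat -> Cmod (u n) <= B * q ^ (n - S K)) ->
  Cmod (s - Cpsum u K)%C <= B / (1 - q).
Proof.
  intros Hs Hq Hb.
  assert (HB : 0 <= B).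
  { specialize (Hb (S K) ltac:(lia)). rewrite Nat.sub_diag in Hb.
    simpl in Hb. pose proof (Cmod_ge_0 (u (S K))). lra. }
  assert (Hpart : forall m, Cmod (Cpsum u (K + m) - Cpsum u K)%C <= B * (1 - q ^ m) / (1 - q)).
  { induction m.
    - rewrite Nat.add_0_r. replace (Cpsum u K - Cpsum u K)%C with (RtoC 0) by ring.
      rewrite Cmod_0. simpl. replace (B * (1 - 1) / (1 - q)) with 0 by (field; lra). lra.
    - replace (K + S m)%nat with (S (K + m)) by lia.
      change (Cmod (Cpsum u (K + m) + u (S (K + m)) - Cpsum u K)%C
              <= B * (1 - q ^ S m) / (1 - q)).
      replace (Cpsum u (K + m) + u (S (K + m)) - Cpsum u K)%C with
        ((Cpsum u (K + m) - Cpsum u K) + u (S (K + m)))%C by ring.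
      eapply Rle_trans. apply Cmod_triangle.
      specialize (Hb (S (K + m)) ltac:(lia)). replace (S (K + m) - S K)%nat with m in Hb by lia.
      replace (B * (1 - q ^ S m) / (1 - q)) with (B * (1 - q ^ m) / (1 - q) + B * q ^ m)
        by (simpl; field; lra). lra. }
  apply Rle_plus_epsilon. intros eps He.
  destruct (Hs eps He) as [N HN]. specialize (HN (K + N)%nat ltac:(lia)).
  change (Cmod (Cpsum u (K + N) - s)%C < eps) in HN.
  specialize (Hpart N).
  assert (B * (1 - q ^ N) / (1 - q) <= B / (1 - q)).
  { unfold Rdiv. apply Rmult_le_compat_r. apply Rlt_le, Rinv_0_lt_compat; lra.
    pose proof (pow_le q N (proj1 Hq)). nra. }
  pose proof (Cmod_sub_tri s (Cpsum u K) (Cpsum u (K + N))) as Htri.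
  replace (s - Cpsum u (K + N))%C with (- (Cpsum u (K + N) - s))%C in Htri by ring.
  rewrite Cmod_opp in Htri. lra.
Qed.

Lemma series_coef_bound (a : nat -> C) (F : C -> C) rho : series_on_U a F -> 0 <= rho < 1 ->
  exists M, 0 <= M /\ forall n, Cmod (a n) * rho ^ n <= M.
Proof.
  intros Hs Hr.
  destruct (Chas_sum_bounded _ _ (Hs _ (inU_RtoC rho Hr))) as [M HM].
  exists M. split.
  - specialize (HM 0%nat). eapply Rle_trans; [apply Cmod_ge_0|exact HM].
  - intros n. specialize (HM n).
    change (Cmod (a n * RtoC rho ^ n)%C <= M) in HM.
    rewrite Cmod_mult, Cmod_pow, Cmod_RtoC in HM; lra.
Qed.

Lemma series_tail_bound (a : nat -> C) (F : C -> C) M rho K (z : C) :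
  series_on_U a F -> 0 < rho -> (forall n, Cmod (a n) * rho ^ n <= M) ->
  Cmod z < rho -> inU z ->
  Cmod (F z - Cpsum (fun n => a n * z ^ n) K)%C <=
    M * (Cmod z / rho) ^ S K / (1 - Cmod z / rho).
Proof.
  intros Hs Hrho HM Hz Hu. set (q := Cmod z / rho).
  assert (Hq : 0 <= q < 1).
  { unfold q. pose proof (Cmod_ge_0 z). split. apply Rdiv_le_0_compat; lra.
    apply Rmult_lt_reg_r with rho; auto. unfold Rdiv. rewrite Rmult_assoc, Rinv_l; lra. }
  apply (Chas_sum_tail_geom _ _ K _ q (Hs z Hu) Hq).
  intros n Hn. rewrite Rmult_assoc, <- pow_add. replace (S K + (n - S K))%nat with n by lia.
  change (Cmod (a n * z ^ n)%C <= M * q ^ n). rewrite Cmod_mult, Cmod_pow.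
  replace (Cmod z) with (rho * q) by (unfold q; field; lra).
  rewrite Rpow_mult_distr, <- Rmult_assoc. apply Rmult_le_compat_r. apply pow_le; lra. apply HM.
Qed.

Lemma series_on_U_at0 (a : nat -> C) (F : C -> C) : series_on_U a F -> F (RtoC 0) = a 0%nat.
Proof.
  intros Hs. specialize (Hs _ (inU_RtoC 0 ltac:(lra))). rewrite Chas_sumE in Hs.
  assert (Hc : forall n, Cpsum (fun n => Cmul (a n) (Cpow (RtoC 0) n)) n = a 0%nat).
  { induction n. simpl. change (a 0%nat * 1 = a 0%nat)%C. ring.
    simpl Cpsum. rewrite IHn. change (a 0%nat + a (S n) * (RtoC 0 * RtoC 0 ^ n) = a 0%nat)%C. ring. }
  assert (H0 : Cmod (a 0%nat - F (RtoC 0))%C = 0).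
  { apply Rle_antisym; [|apply Cmod_ge_0]. apply Rle_plus_epsilon. intros eps He.
    destruct (Hs eps He) as [N HN]. specialize (HN N (le_n _)). rewrite Hc in HN.
    rewrite Rplus_0_l. lra. }
  apply Cmod_eq_0 in H0. change (@eq C (F (RtoC 0)) (a 0%nat)).
  replace (F (RtoC 0)) with (a 0%nat - (a 0%nat - F (RtoC 0)))%C by ring.
  rewrite H0. ring.
Qed.

Definition bigO0 (k : nat) (X : R -> C) : Prop :=
  exists d K, 0 < d /\ forall t, 0 < t < d -> Cmod (X t) <= K * t ^ k.

Lemma bigO0_ext k (X Y : R -> C) : bigO0 k X ->
  (exists d, 0 < d /\ forall t, 0 < t < d -> X t = Y t) -> bigO0 k Y.
Proof.
  intros [d [K [Hd H]]] [d' [Hd' E]]. exists (Rmin d d'), K. split.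
  apply Rmin_pos; auto. intros t Ht. pose proof (Rmin_l d d'). pose proof (Rmin_r d d').
  rewrite <- E by lra. apply H; lra.
Qed.

Lemma bigO0_add k (X Y : R -> C) : bigO0 k X -> bigO0 k Y -> bigO0 k (fun t => X t + Y t)%C.
Proof.
  intros [d [K [Hd H]]] [d' [K' [Hd' H']]]. exists (Rmin d d'), (K + K'). split.
  apply Rmin_pos; auto. intros t Ht. pose proof (Rmin_l d d'). pose proof (Rmin_r d d').
  eapply Rle_trans. apply Cmod_triangle. specialize (H t ltac:(lra)). specialize (H' t ltac:(lra)). lra.
Qed.

Lemma bigO0_opp k (X : R -> C) : bigO0 k X -> bigO0 k (fun t => - X t)%C.
Proof.
  intros [d [K [Hd H]]]. exists d, K. split; auto. intros t Ht. rewrite Cmod_opp. auto.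
Qed.

Lemma bigO0_sub k (X Y : R -> C) : bigO0 k X -> bigO0 k Y -> bigO0 k (fun t => X t - Y t)%C.
Proof. intros. apply (bigO0_add k X (fun t => - Y t)%C); auto. apply bigO0_opp; auto. Qed.

Lemma bigO0_mul j k (X Y : R -> C) :
  bigO0 j X -> bigO0 k Y -> bigO0 (j + k) (fun t => X t * Y t)%C.
Proof.
  intros [d [K [Hd H]]] [d' [K' [Hd' H']]]. exists (Rmin d d'), (K * K'). split.
  apply Rmin_pos; auto. intros t Ht. pose proof (Rmin_l d d'). pose proof (Rmin_r d d').
  rewrite Cmod_mult. specialize (H t ltac:(lra)). specialize (H' t ltac:(lra)).
  rewrite pow_add. replace (K * K' * (t ^ j * t ^ k)) with ((K * t ^ j) * (K' * t ^ k)) by ring.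
  apply Rmult_le_compat; auto; apply Cmod_ge_0.
Qed.

Lemma bigO0_weaken j k (X : R -> C) : (j <= k)%nat -> bigO0 k X -> bigO0 j X.
Proof.
  intros Hjk [d [K [Hd H]]]. exists (Rmin d 1), (Rabs K). split.
  apply Rmin_pos; lra. intros t Ht. pose proof (Rmin_l d 1). pose proof (Rmin_r d 1).
  specialize (H t ltac:(lra)). eapply Rle_trans. exact H.
  assert (t ^ k <= t ^ j).
  { replace k with (j + (k - j))%nat by lia. rewrite pow_add.
    pose proof (pow_le t j ltac:(lra)). pose proof (pow_incr t 1 (k - j) ltac:(lra)).
    rewrite pow1 in *. nra. }
  pose proof (pow_le t k ltac:(lra)). pose proof (Rle_abs K).
  apply Rle_trans with (Rabs K * t ^ k). nra. apply Rmult_le_compat_l; auto. apply Rabs_pos.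
Qed.

Lemma bigO0_const (c : C) : bigO0 0 (fun _ => c).
Proof. exists 1, (Cmod c). split. lra. intros. simpl. lra. Qed.

Lemma bigO0_id : bigO0 1 (fun t => RtoC t).
Proof. exists 1, 1. split. lra. intros. rewrite Cmod_RtoC; lra. Qed.

Lemma bigO0_id0 : bigO0 0 (fun t => RtoC t).
Proof. apply (bigO0_weaken 0 1). lia. apply bigO0_id. Qed.

Lemma bigO0_pow k n (X : R -> C) : bigO0 k X -> bigO0 (n * k) (fun t => X t ^ n)%C.
Proof.
  intros H. induction n.
  - simpl. apply bigO0_const.
  - apply (bigO0_mul k (n * k) X (fun t => X t ^ n)%C); auto.
Qed.

Lemma bigO0_scal k (c : C) (X : R -> C) : bigO0 k X -> bigO0 k (fun t => c * X t)%C.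
Proof. intros H. apply (bigO0_mul 0 k (fun _ => c) X). apply bigO0_const. auto. Qed.

Lemma bigO0_monomial k (c : C) : bigO0 k (fun t => c * RtoC t ^ k)%C.
Proof.
  apply bigO0_scal. replace k with (k * 1)%nat at 1 by lia. apply bigO0_pow, bigO0_id.
Qed.

Lemma bigO0_div_id k (X : R -> C) : bigO0 (S k) X -> bigO0 k (fun t => X t / RtoC t)%C.
Proof.
  intros [d [K [Hd H]]]. exists d, K. split; auto. intros t Ht.
  rewrite Cmod_div by (apply RtoC_neq0; lra). rewrite Cmod_RtoC by lra.
  specialize (H t Ht). simpl in H. apply Rmult_le_reg_r with t. lra.
  unfold Rdiv. rewrite Rmult_assoc, Rinv_l by lra. lra.
Qed.

Lemma bigO0_1_const (c : C) : bigO0 1 (fun _ => c) -> c = RtoC 0.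
Proof.
  intros [d [K [Hd H]]].
  destruct (Req_dec (Cmod c) 0) as [E|E]. apply Cmod_eq_0; auto.
  exfalso. pose proof (Cmod_ge_0 c).
  set (t := Rmin (d / 2) (Cmod c / (2 * (Rabs K + 1)))).
  assert (Ht1 : 0 < t).
  { apply Rmin_pos. lra. apply Rdiv_lt_0_compat. lra. pose proof (Rabs_pos K). lra. }
  pose proof (Rmin_l (d / 2) (Cmod c / (2 * (Rabs K + 1)))).
  pose proof (Rmin_r (d / 2) (Cmod c / (2 * (Rabs K + 1)))).
  fold t in H1, H2. specialize (H t ltac:(lra)). simpl in H.
  pose proof (Rle_abs K). pose proof (Rabs_pos K).
  assert (t * (2 * (Rabs K + 1)) <= Cmod c).
  { apply Rmult_le_reg_r with (/ (2 * (Rabs K + 1))).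
    apply Rinv_0_lt_compat; lra. rewrite Rmult_assoc, Rinv_r by lra. lra. }
  nra.
Qed.

Lemma bigO0_poly2_eq0 (d1 d2 : C) :
  bigO0 3 (fun t => d1 * RtoC t + d2 * RtoC t ^ 2)%C -> d1 = RtoC 0 /\ d2 = RtoC 0.
Proof.
  intros H. apply bigO0_div_id in H.
  assert (H2 : bigO0 2 (fun t => d1 + d2 * RtoC t)%C).
  { eapply bigO0_ext. exact H. exists 1. split. lra. intros t Ht.
    field. apply RtoC_neq0; lra. }
  assert (Hd1 : d1 = RtoC 0).
  { apply bigO0_1_const. eapply bigO0_ext.
    apply (bigO0_sub 1 (fun t => d1 + d2 * RtoC t)%C (fun t => d2 * RtoC t ^ 1)%C).
    apply (bigO0_weaken 1 2); auto. apply bigO0_monomial.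
    exists 1. split. lra. intros. ring. }
  split; auto. subst d1.
  apply bigO0_div_id in H2. apply bigO0_1_const. eapply bigO0_ext. apply (bigO0_weaken 1 1). lia. exact H2.
  exists 1. split. lra. intros t Ht. field. apply RtoC_neq0; lra.
Qed.

Lemma bigO0_poly3_eq0 (d1 d2 d3 : C) :
  bigO0 4 (fun t => d1 * RtoC t + d2 * RtoC t ^ 2 + d3 * RtoC t ^ 3)%C ->
  d1 = RtoC 0 /\ d2 = RtoC 0 /\ d3 = RtoC 0.
Proof.
  intros H.
  assert (Hd1 : d1 = RtoC 0).
  { apply bigO0_div_id in H. apply bigO0_1_const. eapply bigO0_ext.
    apply (bigO0_sub 1 (fun t => (d1 * RtoC t + d2 * RtoC t ^ 2 + d3 * RtoC t ^ 3) / RtoC t)%C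
                      (fun t => d2 * RtoC t ^ 1 + d3 * RtoC t ^ 2)%C).
    apply (bigO0_weaken 1 3). lia. exact H.
    apply bigO0_add. apply bigO0_monomial. apply (bigO0_weaken 1 2). lia. apply bigO0_monomial.
    exists 1. split. lra. intros t Ht. field. apply RtoC_neq0; lra. }
  subst d1. enough (d2 = RtoC 0 /\ d3 = RtoC 0) by tauto.
  apply bigO0_poly2_eq0. eapply bigO0_ext. apply bigO0_div_id, H.
  exists 1. split. lra. intros t Ht. field. apply RtoC_neq0; lra.
Qed.

Lemma series_remainder_bigO0 (a : nat -> C) (F : C -> C) (zeta : R -> C) K :
  series_on_U a F -> bigO0 1 zeta ->
  bigO0 (S K) (fun t => F (zeta t) - Cpsum (fun n => a n * zeta t ^ n) K)%C.
Proof.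
  intros Hs [d [Kz [Hd HZ]]].
  destruct (series_coef_bound a F (1/2) Hs ltac:(lra)) as [M [HM0 HM]].
  set (k := Rabs Kz + 1).
  assert (Hk : 0 < k) by (unfold k; pose proof (Rabs_pos Kz); lra).
  exists (Rmin d (1 / (4 * k))), (2 * M * (2 * k) ^ S K). split.
  { apply Rmin_pos. lra. apply Rdiv_lt_0_compat; lra. }
  intros t Ht. pose proof (Rmin_l d (1 / (4 * k))). pose proof (Rmin_r d (1 / (4 * k))).
  specialize (HZ t ltac:(lra)). rewrite pow_1 in HZ.
  assert (Hz : Cmod (zeta t) <= k * t) by (pose proof (Rle_abs Kz); unfold k; nra).
  assert (Hz4 : Cmod (zeta t) <= 1/4).
  { assert (t * (4 * k) <= 1).
    { apply Rmult_le_reg_r with (/ (4 * k)). apply Rinv_0_lt_compat; lra.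
      rewrite Rmult_assoc, Rinv_r by lra. lra. }
    nra. }
  set (q := Cmod (zeta t) / (1/2)).
  assert (Hq : 0 <= q <= 2 * k * t) by (pose proof (Cmod_ge_0 (zeta t)); unfold q; split; lra).
  assert (Hu : inU (zeta t)) by (unfold inU; change (Cmod (zeta t) < 1); lra).
  eapply Rle_trans. apply (series_tail_bound a F M (1/2)); auto; lra.
  fold q. replace (2 * M * (2 * k) ^ S K * t ^ S K) with (2 * M * (2 * k * t) ^ S K)
    by (rewrite Rpow_mult_distr; ring).
  assert (Hqn : q ^ S K <= (2 * k * t) ^ S K) by (apply pow_incr; lra).
  assert (Hq2 : q <= 1/2) by (unfold q; lra).
  assert (HMq : M * q ^ S K <= M * (2 * k * t) ^ S K) by (apply Rmult_le_compat_l; lra).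
  pose proof (pow_le (2 * k * t) (S K) ltac:(nra)).
  apply Rmult_le_reg_r with (1 - q). lra. unfold Rdiv. rewrite Rmult_assoc, Rinv_l by lra.
  assert (0 <= M * (2 * k * t) ^ S K * (1 - 2 * q)) by (apply Rmult_le_pos; nra).
  nra.
Qed.

Lemma Cpow_sub_bound (x y : C) s n : Cmod x <= s -> Cmod y <= s ->
  Cmod (x ^ S n - y ^ S n)%C <= INR (S n) * Cmod (x - y)%C * s ^ n.
Proof.
  intros Hx Hy. assert (Hs : 0 <= s) by (pose proof (Cmod_ge_0 x); lra).
  induction n.
  - simpl. replace (x * 1 - y * 1)%C with (x - y)%C by ring. lra.
  - replace (x ^ S (S n) - y ^ S (S n))%C with (x * (x ^ S n - y ^ S n) + (x - y) * y ^ S n)%C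
      by (simpl; ring).
    eapply Rle_trans. apply Cmod_triangle. rewrite !Cmod_mult, Cmod_pow.
    pose proof (Cmod_ge_0 (x ^ S n - y ^ S n)%C). pose proof (Cmod_ge_0 (x - y)%C).
    pose proof (Cmod_ge_0 y). pose proof (Cmod_ge_0 x).
    assert (Cmod y ^ S n <= s ^ S n) by (apply pow_incr; lra).
    assert (Cmod x * Cmod (x ^ S n - y ^ S n)%C <= s * (INR (S n) * Cmod (x - y)%C * s ^ n))
      by (apply Rmult_le_compat; auto).
    assert (Cmod (x - y)%C * Cmod y ^ S n <= Cmod (x - y)%C * s ^ S n)
      by (apply Rmult_le_compat_l; auto).
    rewrite S_INR. simpl pow in *. nra.
Qed.

Lemma INR_mul_pow_le_geom k x :
  0 <= x <= 1/2 -> INR (k + 4) * x ^ (k + 3) <= 4 * x ^ 3 * (3/4) ^ k.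
Proof.
  intros Hx.
  assert (Hhalf : INR (k + 4) * (1/2) ^ k <= 4 * (3/4) ^ k).
  { induction k. simpl. lra.
    replace (S k + 4)%nat with (S (k + 4)) by lia. rewrite S_INR. simpl pow.
    assert (4 <= INR (k + 4)) by (rewrite plus_INR; pose proof (pos_INR k); simpl; lra).
    pose proof (pow_le (1/2) k ltac:(lra)). pose proof (pow_le (3/4) k ltac:(lra)).
    set (n := INR (k + 4)) in *. set (p := (1/2)^k) in *.
    assert ((n + 1) * (1/2 * p) <= 5/8 * (n * p)) by nra. nra. }
  rewrite pow_add. pose proof (pow_incr x (1/2) k Hx).
  pose proof (pow_le x k ltac:(lra)). pose proof (pow_le x 3 ltac:(lra)).
  pose proof (pos_INR (k + 4)).
  assert (INR (k + 4) * x ^ k <= INR (k + 4) * (1/2) ^ k) by (apply Rmult_le_compat_l; auto).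
  nra.
Qed.

(* Linear in [h], so that it survives division by [h] in the difference quotient. *)
Lemma series_increment_bound (a : nat -> C) (F : C -> C) M t h :
  series_on_U a F -> (forall n, Cmod (a n) <= M * 2 ^ n) -> 0 < h <= t -> t < 1/8 ->
  Cmod (F (RtoC t + RtoC h) - F (RtoC t)
        - Cpsum (fun n => a n * (RtoC t + RtoC h) ^ n - a n * RtoC t ^ n) 3)%C
    <= 2048 * M * h * t ^ 3.
Proof.
  intros Hs HaM Hh Ht. set (z := RtoC t). set (H := RtoC h).
  assert (HM0 : 0 <= M) by (specialize (HaM 0%nat); pose proof (Cmod_ge_0 (a 0%nat)); simpl in HaM; lra).
  assert (Hzh : Cmod (z + H)%C = t + h) by (unfold z, H; rewrite <- RtoC_plus; apply Cmod_RtoC; lra).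
  assert (Hz : Cmod z = t) by (apply Cmod_RtoC; lra).
  assert (HH : Cmod H = h) by (apply Cmod_RtoC; lra).
  pose proof (Chas_sum_minus _ _ _ _ (Hs _ (inU_RtoC (t + h) ltac:(lra)))
                                     (Hs _ (inU_RtoC t ltac:(lra)))) as Hc.
  rewrite RtoC_plus in Hc.
  change (Chas_sum (fun n => a n * (z + H) ^ n - a n * z ^ n)%C (F (z + H) - F z)%C) in Hc.
  replace (2048 * M * h * t ^ 3) with (512 * M * h * t ^ 3 / (1 - 3/4)) by field.
  apply (Chas_sum_tail_geom _ _ 3 _ (3/4) Hc ltac:(lra)).
  intros n Hn. destruct (Nat.le_exists_sub 4 n ltac:(lia)) as [k [-> _]].
  replace (k + 4 - 4)%nat with k by lia.
  replace (a (k + 4)%nat * (z + H) ^ (k + 4) - a (k + 4)%nat * z ^ (k + 4))%C with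
    (a (k + 4)%nat * ((z + H) ^ (k + 4) - z ^ (k + 4)))%C by ring.
  rewrite Cmod_mult.
  pose proof (Cpow_sub_bound (z + H)%C z (2 * t) (k + 3) ltac:(lra) ltac:(lra)) as Hpd.
  replace (z + H - z)%C with H in Hpd by ring. rewrite HH in Hpd.
  replace (S (k + 3)) with (k + 4)%nat in Hpd by lia.
  pose proof (Cmod_ge_0 ((z + H) ^ (k + 4) - z ^ (k + 4))%C).
  eapply Rle_trans. apply Rmult_le_compat; [apply Cmod_ge_0 | auto | apply HaM | exact Hpd].
  replace (M * 2 ^ (k + 4) * (INR (k + 4) * h * (2 * t) ^ (k + 3))) with
    (2 * M * h * (INR (k + 4) * (4 * t) ^ (k + 3))).
  2:{ replace (4 * t) with (2 * (2 * t)) by ring. rewrite (Rpow_mult_distr 2 (2 * t)).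
      replace (k + 4)%nat with (S (k + 3)) by lia. simpl pow. ring. }
  replace (512 * M * h * t ^ 3 * (3 / 4) ^ k) with (2 * M * h * (4 * (4 * t) ^ 3 * (3 / 4) ^ k))
    by (simpl; ring).
  apply Rmult_le_compat_l. nra. apply INR_mul_pow_le_geom. lra.
Qed.

Lemma series_deriv_gap_bound (a : nat -> C) (F : C -> C) M t h L :
  series_on_U a F -> (forall n, Cmod (a n) <= M * 2 ^ n) -> 0 < h <= t -> t < 1/8 ->
  Cmod (L - (a 1%nat + 2 * a 2%nat * RtoC t + 3 * a 3%nat * RtoC t ^ 2))%C <=
    Cmod ((F (RtoC t + RtoC h) - F (RtoC t)) / RtoC h - L)%C + 2048 * M * t ^ 3
    + h * (Cmod (a 2%nat) + 4 * t * Cmod (a 3%nat)).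
Proof.
  intros Hs HaM Hh Ht.
  pose proof (series_increment_bound a F M t h Hs HaM Hh Ht) as HE.
  rewrite Cpsum3 in HE. set (z := RtoC t) in *. set (H := RtoC h) in *.
  assert (HH : Cmod H = h) by (unfold H; apply Cmod_RtoC; lra).
  assert (HH0 : H <> RtoC 0) by (apply RtoC_neq0; lra).
  set (E := (F (z + H) - F z - _)%C) in HE.
  (* [L - P'(t)] splits into the derivative error, the quartic remainder and the
     quadratic part of the difference quotient of the cubic Taylor polynomial [P]. *)
  replace (L - (a 1%nat + 2 * a 2%nat * z + 3 * a 3%nat * z ^ 2))%C with
    (- ((F (z + H) - F z) / H - L) + E / H + H * (a 2%nat + a 3%nat * (3 * z + H)))%C.
  2:{ unfold E. field. auto. }
  eapply Rle_trans. apply Cmod_triangle. eapply Rle_trans. apply Rplus_le_compat_r. apply Cmod_triangle.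
  rewrite Cmod_opp, Cmod_div, Cmod_mult, HH by auto.
  assert (HEh : Cmod E / h <= 2048 * M * t ^ 3).
  { apply Rmult_le_reg_r with h. lra. unfold Rdiv. rewrite Rmult_assoc, Rinv_l by lra. lra. }
  assert (Hq : Cmod (a 2%nat + a 3%nat * (3 * z + H))%C <= Cmod (a 2%nat) + 4 * t * Cmod (a 3%nat)).
  { eapply Rle_trans. apply Cmod_triangle. rewrite Cmod_mult.
    replace (3 * z + H)%C with (RtoC (3 * t + h)) by (unfold z, H; rewrite RtoC_plus, RtoC_mult; reflexivity).
    rewrite Cmod_RtoC by lra. pose proof (Cmod_ge_0 (a 3%nat)). nra. }
  assert (h * Cmod (a 2%nat + a 3%nat * (3 * z + H))%C
            <= h * (Cmod (a 2%nat) + 4 * t * Cmod (a 3%nat))) by (apply Rmult_le_compat_l; lra).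
  lra.
Qed.

Lemma deriv_remainder_bigO0 (a : nat -> C) (F Fp : C -> C) :
  series_on_U a F -> (forall z, inU z -> Cderiv F z (Fp z)) ->
  bigO0 3 (fun t => Fp (RtoC t) - (a 1%nat + 2 * a 2%nat * RtoC t + 3 * a 3%nat * RtoC t ^ 2))%C.
Proof.
  intros Hs Hd.
  destruct (series_coef_bound a F (1/2) Hs ltac:(lra)) as [M [HM0 HM]].
  assert (HaM : forall n, Cmod (a n) <= M * 2 ^ n).
  { intros n. specialize (HM n). rewrite <- (Rmult_1_r (Cmod (a n))), <- (pow1 n).
    replace 1 with (1/2 * 2) by field. rewrite Rpow_mult_distr, <- Rmult_assoc.
    apply Rmult_le_compat_r; auto. apply pow_le; lra. }
  exists (1/8), (2048 * M). split. lra. intros t Ht.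
  apply Rle_plus_epsilon. intros eps He.
  destruct (Hd (RtoC t) (inU_RtoC t ltac:(lra)) (eps/2) ltac:(lra)) as [del [Hdel HD]].
  set (A := Cmod (a 2%nat) + 4 * t * Cmod (a 3%nat) + 1).
  assert (HA : 0 < A).
  { unfold A. pose proof (Cmod_ge_0 (a 2%nat)). pose proof (Cmod_ge_0 (a 3%nat)). nra. }
  set (h := Rmin (Rmin (del/2) t) (eps / 2 / A)).
  assert (Hh0 : 0 < h).
  { unfold h. apply Rmin_pos. apply Rmin_pos; lra. apply Rdiv_lt_0_compat; lra. }
  assert (Hh1 : h <= del / 2) by (unfold h; eapply Rle_trans; [apply Rmin_l|apply Rmin_l]).
  assert (Hh2 : h <= t) by (unfold h; eapply Rle_trans; [apply Rmin_l|apply Rmin_r]).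
  assert (Hh3 : h * A <= eps / 2).
  { assert (h <= eps / 2 / A) by (unfold h; apply Rmin_r).
    apply Rmult_le_reg_r with (/ A). apply Rinv_0_lt_compat; lra.
    rewrite Rmult_assoc, Rinv_r by lra. lra. }
  assert (HH : Cmod (RtoC h) = h) by (apply Cmod_RtoC; lra).
  specialize (HD (RtoC h) ltac:(change (0 < Cmod (RtoC h)); lra)
                 ltac:(change (Cmod (RtoC h) < del); lra)).
  change (Cmod ((F (RtoC t + RtoC h) - F (RtoC t)) / RtoC h - Fp (RtoC t))%C < eps / 2) in HD.
  pose proof (series_deriv_gap_bound a F M t h (Fp (RtoC t)) Hs HaM ltac:(lra) ltac:(lra)).
  unfold A in Hh3. lra.
Qed.

Lemma bazilE lam (F Fp : C -> C) z :
  bazil lam F Fp z = (RtoC (1 - lam) * (F z / z) + RtoC lam * Fp z)%C.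
Proof. reflexivity. Qed.

Lemma bazil_remainder_bigO0 lam (a : nat -> C) (F Fp : C -> C) :
  series_on_U a F -> a 0%nat = RtoC 0 -> a 1%nat = RtoC 1 ->
  (forall z, inU z -> Cderiv F z (Fp z)) ->
  bigO0 3 (fun t => bazil lam F Fp (RtoC t)
    - (1 + (1 + RtoC lam) * a 2%nat * RtoC t + (1 + 2 * RtoC lam) * a 3%nat * RtoC t ^ 2))%C.
Proof.
  intros Hs Ha0 Ha1 Hd.
  pose (XF := fun t => (F (RtoC t) - (RtoC t + a 2%nat * RtoC t ^ 2 + a 3%nat * RtoC t ^ 3))%C).
  assert (HXF : bigO0 4 XF).
  { eapply bigO0_ext. apply (series_remainder_bigO0 a F (fun t => RtoC t) 3 Hs bigO0_id).
    exists 1. split. lra. intros t Ht. rewrite Cpsum3. unfold XF. rewrite Ha0, Ha1. ring. }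
  pose (XFp := fun t => (Fp (RtoC t) - (1 + 2 * a 2%nat * RtoC t + 3 * a 3%nat * RtoC t ^ 2))%C).
  assert (HXFp : bigO0 3 XFp).
  { eapply bigO0_ext. apply (deriv_remainder_bigO0 a F Fp Hs Hd).
    exists 1. split. lra. intros t Ht. unfold XFp. rewrite Ha1. ring. }
  eapply bigO0_ext.
  - apply (bigO0_add 3 (fun t => (1 - RtoC lam) * (XF t / RtoC t))%C (fun t => RtoC lam * XFp t)%C).
    + apply bigO0_scal, bigO0_div_id, HXF.
    + apply bigO0_scal, HXFp.
  - exists 1. split. lra. intros t Ht. rewrite bazilE, RtoC_minus. unfold XF, XFp.
    field. apply RtoC_neq0; lra.
Qed.

Lemma phi0E z : phi0 z = ((1 + z) / (1 - z))%C.
Proof. reflexivity. Qed.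

Lemma phi0_subordinate_identity (P w : C -> C) :
  (forall z, inU z -> inU (w z)) -> (forall z, inU z -> z <> C0 -> P z = phi0 (w z)) ->
  forall t, 0 < t < 1 -> (P (RtoC t) * (1 - w (RtoC t)) = 1 + w (RtoC t))%C.
Proof.
  intros HwU Heq t Ht. pose proof (HwU _ (inU_RtoC t ltac:(lra))) as Hw.
  assert (H1 : (1 - w (RtoC t))%C <> RtoC 0).
  { intro E. replace (w (RtoC t)) with (RtoC 1) in Hw
      by (replace (w (RtoC t)) with (1 - (1 - w (RtoC t)))%C by ring; rewrite E; ring).
    unfold inU in Hw. change (Cmod (RtoC 1) < 1) in Hw. rewrite Cmod_1 in Hw. lra. }
  rewrite (Heq _ (inU_RtoC t ltac:(lra)) (RtoC_neq0 t ltac:(lra))), phi0E.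
  field. auto.
Qed.

(* Matching coefficients in [P (1 - w) = 1 + w]. *)
Lemma phi0_subordinate_coefs (P w : C -> C) (c : nat -> C) (A B : C) :
  bigO0 3 (fun t => P (RtoC t) - (1 + A * RtoC t + B * RtoC t ^ 2))%C ->
  series_on_U c w -> c 0%nat = RtoC 0 -> (forall z, inU z -> inU (w z)) ->
  (forall z, inU z -> z <> C0 -> P z = phi0 (w z)) ->
  A = (2 * c 1%nat)%C /\ B = (2 * (c 2%nat + c 1%nat * c 1%nat))%C.
Proof.
  intros HXP Hc Hc0 HwU Heq.
  pose (P0 := fun t => (1 + A * RtoC t + B * RtoC t ^ 2)%C).
  pose (XP := fun t => (P (RtoC t) - P0 t)%C).
  pose (W0 := fun t => (c 1%nat * RtoC t + c 2%nat * RtoC t ^ 2)%C).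
  pose (XW := fun t => (w (RtoC t) - W0 t)%C).
  assert (HXW : bigO0 3 XW).
  { eapply bigO0_ext. apply (series_remainder_bigO0 c w (fun t => RtoC t) 2 Hc bigO0_id).
    exists 1. split. lra. intros t Ht. rewrite Cpsum2. unfold XW, W0. rewrite Hc0. ring. }
  pose proof (phi0_subordinate_identity P w HwU Heq) as HW.
  pose (D := fun t => ((A - 2 * c 1%nat) * RtoC t + (B - 2 * c 2%nat - A * c 1%nat) * RtoC t ^ 2)%C).
  assert (HD : bigO0 3 D).
  { eapply bigO0_ext.
    apply (bigO0_add 3 (fun t => - (XP t - XW t - P0 t * XW t - XP t * W0 t - XP t * XW t)
                     + (A * c 2%nat + B * c 1%nat) * RtoC t ^ 3)%C
                    (fun t => (B * c 2%nat) * RtoC t ^ 4)%C).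
    - apply bigO0_add; [apply bigO0_opp | apply bigO0_monomial].
      apply bigO0_sub; [apply bigO0_sub; [apply bigO0_sub; [apply bigO0_sub|]|]|].
      + exact HXP.
      + exact HXW.
      + apply (bigO0_mul 0 3); [|exact HXW].
        apply bigO0_add; [apply bigO0_add; [apply bigO0_const|]|];
          [apply bigO0_scal, bigO0_id0 | apply (bigO0_weaken 0 2); [lia | apply bigO0_monomial]].
      + apply (bigO0_mul 3 0); [exact HXP|].
        apply bigO0_add;
          [apply bigO0_scal, bigO0_id0 | apply (bigO0_weaken 0 2); [lia | apply bigO0_monomial]].
      + apply (bigO0_weaken 3 6). lia. apply (bigO0_mul 3 3); assumption.
    - apply (bigO0_weaken 3 4). lia. apply bigO0_monomial.
    - exists 1. split. lra. intros t Ht.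
      unfold D. transitivity (- (XP t - XW t - P0 t * XW t - XP t * W0 t - XP t * XW t)
                     + (A * c 2%nat + B * c 1%nat) * RtoC t ^ 3 + B * c 2%nat * RtoC t ^ 4
                     + (P (RtoC t) * (1 - w (RtoC t)) - (1 + w (RtoC t))))%C.
      + rewrite (HW t Ht). ring.
      + unfold XP, XW, P0, W0. ring. }
  destruct (bigO0_poly2_eq0 _ _ HD) as [E1 E2].
  assert (EA : A = (2 * c 1%nat)%C).
  { replace A with ((A - 2 * c 1%nat) + 2 * c 1%nat)%C by ring. rewrite E1. ring. }
  split; auto.
  replace B with ((B - 2 * c 2%nat - A * c 1%nat) + 2 * c 2%nat + A * c 1%nat)%C by ring.
  rewrite E2, EA. ring.
Qed.

Lemma series_comp_remainder_bigO0 (a b : nat -> C) (f g : C -> C) :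
  series_on_U a f -> a 0%nat = RtoC 0 -> a 1%nat = RtoC 1 ->
  series_on_U b g -> b 0%nat = RtoC 0 ->
  bigO0 4 (fun t => f (g (RtoC t)) - (b 1%nat * RtoC t
    + (b 2%nat + a 2%nat * b 1%nat * b 1%nat) * RtoC t ^ 2
    + (b 3%nat + 2 * a 2%nat * b 1%nat * b 2%nat + a 3%nat * b 1%nat * b 1%nat * b 1%nat)
        * RtoC t ^ 3))%C.
Proof.
  intros Hf Ha0 Ha1 Hg Hb0.
  pose (Q := fun t => (b 1%nat * RtoC t + b 2%nat * RtoC t ^ 2 + b 3%nat * RtoC t ^ 3)%C).
  pose (XG := fun t => (g (RtoC t) - Q t)%C).
  assert (HXG : bigO0 4 XG).
  { eapply bigO0_ext. apply (series_remainder_bigO0 b g (fun t => RtoC t) 3 Hg bigO0_id).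
    exists 1. split. lra. intros t Ht. rewrite Cpsum3. unfold XG, Q. rewrite Hb0. ring. }
  pose (G := fun t => g (RtoC t)).
  assert (HG : bigO0 1 G).
  { eapply bigO0_ext. apply (series_remainder_bigO0 b g (fun t => RtoC t) 0 Hg bigO0_id).
    exists 1. split. lra. intros t Ht. unfold G. simpl. rewrite Hb0. ring. }
  assert (HG0 : bigO0 0 G) by (apply (bigO0_weaken 0 1); [lia|exact HG]).
  assert (HQ0 : bigO0 0 Q).
  { eapply bigO0_ext. apply (bigO0_sub 0 G XG). exact HG0. apply (bigO0_weaken 0 4). lia. exact HXG.
    exists 1. split. lra. intros. unfold XG, G. ring. }
  pose (XF := fun t => (f (G t) - (G t + a 2%nat * G t ^ 2 + a 3%nat * G t ^ 3))%C).
  assert (HXF : bigO0 4 XF).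
  { eapply bigO0_ext. apply (series_remainder_bigO0 a f G 3 Hf HG).
    exists 1. split. lra. intros t Ht. rewrite Cpsum3. unfold XF. rewrite Ha0, Ha1. ring. }
  (* Substituting [G = Q + XG] into the cubic leaves multiples of [XG] and the part of
     [Q + a2 Q^2 + a3 Q^3] of degree at least 4, which is [t^4] times a polynomial in
     [t] and [m t]. *)
  pose (m := fun t => (b 2%nat + b 3%nat * RtoC t)%C).
  eapply bigO0_ext.
  - apply (bigO0_add 4 (fun t => XF t + XG t + a 2%nat * (XG t * (G t + Q t))
                    + a 3%nat * (XG t * (G t ^ 2 + G t * Q t + Q t ^ 2)))%C
        (fun t => RtoC t ^ 4 * (a 2%nat * (2 * b 1%nat * b 3%nat + m t ^ 2) +
           a 3%nat * m t * (3 * b 1%nat ^ 2 + 3 * b 1%nat * RtoC t * m t + RtoC t ^ 2 * m t ^ 2)))%C).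
    + apply bigO0_add; [apply bigO0_add; [apply bigO0_add|]|].
      * exact HXF.
      * exact HXG.
      * apply bigO0_scal, (bigO0_mul 4 0); [exact HXG|]. apply (bigO0_add 0); assumption.
      * apply bigO0_scal, (bigO0_mul 4 0); [exact HXG|].
        repeat apply (bigO0_add 0).
        -- apply (bigO0_pow 0 2); exact HG0.
        -- apply (bigO0_mul 0 0); assumption.
        -- apply (bigO0_pow 0 2); exact HQ0.
    + assert (Hm : bigO0 0 m) by (apply bigO0_add; [apply bigO0_const | apply bigO0_scal, bigO0_id0]).
      apply (bigO0_mul 4 0). replace 4%nat with (4 * 1)%nat by lia. apply bigO0_pow, bigO0_id.
      repeat first [apply (bigO0_add 0) | apply (bigO0_mul 0 0) | apply bigO0_scal
                   | apply (bigO0_pow 0 2) | apply bigO0_const | apply bigO0_id0 | exact Hm].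
  - exists 1. split. lra. intros t Ht. unfold XF, XG, Q, m, G. cbv beta. ring.
Qed.

Lemma inverse_series_coefs (a b : nat -> C) (f g : C -> C) r :
  series_on_U a f -> a 0%nat = RtoC 0 -> a 1%nat = RtoC 1 ->
  series_on_U b g -> b 0%nat = RtoC 0 -> 0 < r ->
  (forall w, Cnorm w < r -> f (g w) = w) ->
  b 1%nat = RtoC 1 /\ b 2%nat = (- a 2%nat)%C /\
  b 3%nat = (2 * a 2%nat * a 2%nat - a 3%nat)%C.
Proof.
  intros Hf Ha0 Ha1 Hg Hb0 Hr Hinv.
  set (d1 := (1 - b 1%nat)%C).
  set (d2 := (- (b 2%nat + a 2%nat * b 1%nat * b 1%nat))%C).
  set (d3 := (- (b 3%nat + 2 * a 2%nat * b 1%nat * b 2%nat + a 3%nat * b 1%nat * b 1%nat * b 1%nat))%C).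
  assert (HD : bigO0 4 (fun t => d1 * RtoC t + d2 * RtoC t ^ 2 + d3 * RtoC t ^ 3)%C).
  { eapply bigO0_ext. apply (series_comp_remainder_bigO0 a b f g Hf Ha0 Ha1 Hg Hb0).
    exists r. split. auto. intros t Ht.
    assert (Ht' : Cnorm (RtoC t) < r) by (change (Cmod (RtoC t) < r); rewrite Cmod_RtoC; lra).
    rewrite (Hinv _ Ht'). unfold d1, d2, d3. ring. }
  destruct (bigO0_poly3_eq0 _ _ _ HD) as [E1 [E2 E3]].
  assert (B1 : b 1%nat = RtoC 1).
  { replace (b 1%nat) with (1 - d1)%C by (unfold d1; ring). rewrite E1. ring. }
  assert (B2 : b 2%nat = (- a 2%nat)%C).
  { replace (b 2%nat) with (- d2 - a 2%nat * b 1%nat * b 1%nat)%C by (unfold d2; ring).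
    rewrite E2, B1. ring. }
  split; [|split]; auto.
  replace (b 3%nat) with
    (- d3 - (2 * a 2%nat * b 1%nat * b 2%nat + a 3%nat * b 1%nat * b 1%nat * b 1%nat))%C
    by (unfold d3; ring).
  rewrite E3, B1, B2. ring.
Qed.

(* [csum f n] and [rsum f n] sum [f 0 + ... + f (n - 1)]. *)
Fixpoint csum (f : nat -> C) (n : nat) : C :=
  match n with O => RtoC 0 | S n => (csum f n + f n)%C end.
Fixpoint rsum (f : nat -> R) (n : nat) : R :=
  match n with O => 0 | S n => rsum f n + f n end.

Lemma csum_ext f g n : (forall k, (k < n)%nat -> f k = g k) -> csum f n = csum g n.
Proof. induction n; intros H; simpl. auto. rewrite IHn, H. auto. lia. intros; apply H; lia. Qed.

Lemma csum_plus f g n : csum (fun k => f k + g k)%C n = (csum f n + csum g n)%C.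
Proof. induction n; simpl. ring. rewrite IHn. ring. Qed.

Lemma csum_scal c f n : csum (fun k => c * f k)%C n = (c * csum f n)%C.
Proof. induction n; simpl. ring. rewrite IHn. ring. Qed.

Lemma csum_const c n : csum (fun _ => c) n = (RtoC (INR n) * c)%C.
Proof. induction n; simpl csum. simpl. ring. rewrite IHn, S_INR, RtoC_plus. ring. Qed.

Lemma csum_conj f n : csum (fun k => Cconj (f k)) n = Cconj (csum f n).
Proof.
  induction n; simpl. unfold Cconj, RtoC; simpl. f_equal; ring.
  rewrite IHn, Cplus_conj. auto.
Qed.

Lemma csum_geom x n : ((x - 1) * csum (fun k => x ^ k) n = x ^ n - 1)%C.
Proof. induction n; simpl csum. simpl. ring. rewrite Cmult_plus_distr_l, IHn. simpl. ring. Qed.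

Lemma csum_Cpsum (F : nat -> nat -> C) K N :
  csum (fun k => Cpsum (fun n => F n k) K) N = Cpsum (fun n => csum (fun k => F n k) N) K.
Proof.
  induction K.
  - reflexivity.
  - change (csum (fun k => (Cpsum (fun n => F n k) K + F (S K) k)%C) N =
            (Cpsum (fun n => csum (fun k => F n k) N) K + csum (fun k => F (S K) k) N)%C).
    rewrite csum_plus, IHK. reflexivity.
Qed.

Lemma Re_csum f n : Re (csum f n) = rsum (fun k => Re (f k)) n.
Proof. induction n; simpl. auto. rewrite <- IHn. auto. Qed.

Lemma rsum_le f g n : (forall k, (k < n)%nat -> f k <= g k) -> rsum f n <= rsum g n.
Proof.
  induction n; intros H; simpl. lra. pose proof (H n ltac:(lia)).
  assert (rsum f n <= rsum g n) by (apply IHn; intros; apply H; lia). lra.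
Qed.

Lemma rsum_const c n : rsum (fun _ => c) n = INR n * c.
Proof. induction n; simpl rsum. simpl; ring. rewrite IHn, S_INR. ring. Qed.

Lemma rsum_lin (f g : nat -> R) a b n :
  rsum (fun k => a * f k + b * g k) n = a * rsum f n + b * rsum g n.
Proof. induction n; simpl. ring. rewrite IHn. ring. Qed.

Definition root_of_unity (N : nat) : C := (cos (2 * PI / INR N), sin (2 * PI / INR N)).

Lemma root_of_unity_pow N m : (0 < N)%nat ->
  (root_of_unity N ^ m = (cos (2 * PI * INR m / INR N), sin (2 * PI * INR m / INR N)))%C.
Proof.
  intros HN. assert (INR N <> 0) by (apply not_0_INR; lia).
  induction m.
  - simpl. replace (2 * PI * 0 / INR N) with 0 by (field; auto). rewrite cos_0, sin_0. reflexivity.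
  - rewrite Cpow_S, IHm, S_INR. unfold root_of_unity, Cmult. simpl.
    replace (2 * PI * (INR m + 1) / INR N) with (2 * PI / INR N + 2 * PI * INR m / INR N)
      by (field; auto).
    rewrite cos_plus, sin_plus. f_equal; ring.
Qed.

Lemma root_of_unity_pow_N N : (0 < N)%nat -> (root_of_unity N ^ N = 1)%C.
Proof.
  intros HN. rewrite root_of_unity_pow by auto. assert (INR N <> 0) by (apply not_0_INR; lia).
  replace (2 * PI * INR N / INR N) with (2 * PI) by (field; auto).
  rewrite cos_2PI, sin_2PI. reflexivity.
Qed.

Lemma root_of_unity_pow_neq1 N j : (0 < j < N)%nat -> (root_of_unity N ^ j <> 1)%C.
Proof.
  intros Hj E. rewrite root_of_unity_pow in E by lia.
  injection E as E1 E2.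
  assert (HN : 0 < INR N) by (apply lt_0_INR; lia).
  assert (Hj0 : 0 < INR j) by (apply lt_0_INR; lia).
  assert (HjN : INR j < INR N) by (apply lt_INR; lia).
  set (x := 2 * PI * INR j / INR N) in *.
  assert (0 < x < 2 * PI).
  { pose proof PI_RGT_0. unfold x. split. apply Rdiv_lt_0_compat; nra.
    apply Rmult_lt_reg_r with (INR N). auto. unfold Rdiv. rewrite Rmult_assoc, Rinv_l by lra. nra. }
  destruct (sin_eq_O_2PI_0 x ltac:(lra) ltac:(lra) E2) as [H1|[H1|H1]]; try lra.
  rewrite H1, cos_PI in E1. lra.
Qed.

Lemma Cmod_root_of_unity N : Cmod (root_of_unity N) = 1.
Proof.
  unfold Cmod, root_of_unity. simpl. pose proof (sin2_cos2 (2 * PI / INR N)). unfold Rsqr in H.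
  replace (cos (2 * PI / INR N) * (cos (2 * PI / INR N) * 1) +
           sin (2 * PI / INR N) * (sin (2 * PI / INR N) * 1)) with 1 by lra.
  apply sqrt_1.
Qed.

Lemma root_of_unity_pow_sum N j :
  (0 < j < N)%nat -> csum (fun k => (root_of_unity N ^ k) ^ j)%C N = RtoC 0.
Proof.
  intros Hj. set (x := (root_of_unity N ^ j)%C).
  rewrite (csum_ext _ (fun k => x ^ k)%C).
  2:{ intros. unfold x. rewrite <- !Cpow_mult_r, Nat.mul_comm. auto. }
  pose proof (csum_geom x N) as G.
  assert (HxN : (x ^ N = 1)%C).
  { unfold x. rewrite <- Cpow_mult_r, Nat.mul_comm, Cpow_mult_r, root_of_unity_pow_N by lia.
    apply Cpow_1_l. }
  rewrite HxN in G.
  assert (Hn : (x - 1)%C <> RtoC 0).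
  { intro F. apply (root_of_unity_pow_neq1 N j Hj). fold x.
    replace x with ((x - 1) + 1)%C by ring. rewrite F. ring. }
  replace (csum _ N) with (/ (x - 1) * ((x - 1) * csum (fun k => x ^ k)%C N))%C by (field; auto).
  rewrite G. ring.
Qed.

Lemma Cconj_RtoC r : Cconj (RtoC r) = RtoC r.
Proof. unfold Cconj, RtoC. simpl. f_equal. ring. Qed.

Lemma Re_mul_conj x : Re (x * Cconj x)%C = Cmod x ^ 2.
Proof. rewrite <- Cmod2_conj, re_RtoC. reflexivity. Qed.

Lemma Cpsum_first3 (u : nat -> C) K : (2 <= K)%nat ->
  (forall n, (3 <= n <= K)%nat -> u n = RtoC 0) -> Cpsum u K = (u 0%nat + u 1%nat + u 2%nat)%C.
Proof.
  intros HK Hu. induction K. lia.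
  destruct (Nat.eq_dec K 1). subst. reflexivity.
  change (@eq C (Cpsum u K + u (S K))%C (u 0%nat + u 1%nat + u 2%nat)%C).
  rewrite IHK by (lia || (intros; apply Hu; lia)). rewrite (Hu (S K)) by lia. ring.
Qed.

Section RootsOfUnityMeans.
Variable N : nat.
Hypothesis HN : (3 <= N)%nat.
Let e k := (root_of_unity N ^ k)%C.
Let Et m j k := ((e k) ^ m * Cconj (e k) ^ j)%C.
(* [E m j] is [N] times the mean of [z^m conj(z)^j] over the [N]-th roots of unity. *)
Let E m j := csum (Et m j) N.

Lemma e_mul_conj k : (e k * Cconj (e k) = 1)%C.
Proof.
  unfold e. rewrite <- Cmod2_conj, Cmod_pow, Cmod_root_of_unity, pow1.
  simpl. f_equal. unfold RtoC. f_equal; ring.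
Qed.

Lemma E_diag m : E m m = RtoC (INR N).
Proof.
  unfold E. rewrite (csum_ext _ (fun _ => RtoC 1)). rewrite csum_const. ring.
  intros k _. unfold Et. rewrite <- Cpow_mult_l, e_mul_conj, Cpow_1_l. auto.
Qed.

Lemma E_offdiag m j : (m <> j)%nat -> (m < j + N)%nat -> (j < m + N)%nat -> E m j = RtoC 0.
Proof.
  intros H1 H2 H3. unfold E. destruct (le_lt_dec j m).
  - rewrite (csum_ext _ (fun k => (root_of_unity N ^ k) ^ (m - j))%C).
    { apply root_of_unity_pow_sum. lia. }
    intros k _. unfold Et. fold (e k). replace m with ((m - j) + j)%nat at 1 by lia.
    rewrite Cpow_add_r, <- Cmult_assoc, <- Cpow_mult_l, e_mul_conj, Cpow_1_l. apply Cmult_1_r.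
  - rewrite (csum_ext _ (fun k => Cconj ((root_of_unity N ^ k) ^ (j - m)))%C).
    { rewrite csum_conj, root_of_unity_pow_sum by lia. apply Cconj_RtoC. }
    intros k _. unfold Et. fold (e k). replace j with (m + (j - m))%nat at 1 by lia.
    rewrite Cpow_add_r, Cmult_assoc, <- Cpow_mult_l, e_mul_conj, Cpow_1_l,
      (Cpow_conj (e k) (j - m)). apply Cmult_1_l.
Qed.

Lemma mean_norm2_affine (s : C) r :
  csum (fun k => (1 + s * (RtoC r * e k)) * Cconj (1 + s * (RtoC r * e k)))%C N =
  (RtoC (INR N) * (1 + s * Cconj s * RtoC r ^ 2))%C.
Proof.
  rewrite (csum_ext _ (fun k => Et 0 0 k + (s * RtoC r) * Et 1 0 k + (Cconj s * RtoC r) * Et 0 1 k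
                                + (s * Cconj s * RtoC r ^ 2) * Et 1 1 k)%C).
  - rewrite !csum_plus, !csum_scal. fold (E 0 0) (E 1 0) (E 0 1) (E 1 1).
    rewrite !E_diag, (E_offdiag 1 0), (E_offdiag 0 1) by lia. ring.
  - intros k _. unfold Et. rewrite Cplus_conj, !Cmult_conj, Cconj_RtoC, Cconj_RtoC.
    set (x := e k). ring.
Qed.

Lemma mean_norm2_quadratic (c1 b : C) r :
  csum (fun k => (c1 * (RtoC r * e k) + b * (RtoC r * e k) ^ 2) *
                 Cconj (c1 * (RtoC r * e k) + b * (RtoC r * e k) ^ 2))%C N =
  (RtoC (INR N) * (c1 * Cconj c1 * RtoC r ^ 2 + b * Cconj b * RtoC r ^ 4))%C.
Proof.
  rewrite (csum_ext _ (fun k => (c1 * Cconj c1 * RtoC r ^ 2) * Et 1 1 k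
        + (c1 * Cconj b * RtoC r ^ 3) * Et 1 2 k + (b * Cconj c1 * RtoC r ^ 3) * Et 2 1 k
        + (b * Cconj b * RtoC r ^ 4) * Et 2 2 k)%C).
  - rewrite !csum_plus, !csum_scal. fold (E 1 1) (E 1 2) (E 2 1) (E 2 2).
    rewrite !E_diag, (E_offdiag 1 2), (E_offdiag 2 1) by lia. ring.
  - intros k _. unfold Et. rewrite !Cplus_conj, !Cmult_conj, !Cpow_conj, !Cmult_conj, !Cconj_RtoC.
    set (x := e k). ring.
Qed.

(* Only the terms of degree 1 and 2 of [P (z) (1 + s z)] correlate with [c1 z + b z^2]
   over the circle, since [deg P + 1 < N]. *)
Lemma mean_trunc_series_cross (c : nat -> C) (s : C) r K :
  (2 <= K)%nat -> (K + 3 <= N)%nat -> c 0%nat = RtoC 0 ->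
  csum (fun k => (Cpsum (fun n => c n * (RtoC r * e k) ^ n)%C K * (1 + s * (RtoC r * e k))) *
      Cconj (c 1%nat * (RtoC r * e k) + (c 2%nat + s * c 1%nat) * (RtoC r * e k) ^ 2))%C N =
  (RtoC (INR N) * (c 1%nat * Cconj (c 1%nat) * RtoC r ^ 2 +
      (c 2%nat + s * c 1%nat) * Cconj (c 2%nat + s * c 1%nat) * RtoC r ^ 4))%C.
Proof.
  intros HK HKN Hc0.
  set (b := (c 2%nat + s * c 1%nat)%C).
  set (cb := Cconj b). set (cc := Cconj (c 1%nat)).
  set (val := fun n => (c n * RtoC r ^ n * (cc * RtoC r * E n 1 + cc * s * RtoC r ^ 2 * E (S n) 1
                 + cb * RtoC r ^ 2 * E n 2 + cb * s * RtoC r ^ 3 * E (S n) 2))%C).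
  transitivity (Cpsum val K).
  - rewrite (csum_ext _ (fun k => Cpsum (fun n => c n * (RtoC r * e k) ^ n *
          ((1 + s * (RtoC r * e k)) * Cconj (c 1%nat * (RtoC r * e k) + b * (RtoC r * e k) ^ 2)))%C K)).
    2:{ intros k _. rewrite <- Cpsum_mult_r. fold b. ring. }
    rewrite (csum_Cpsum (fun n k => c n * (RtoC r * e k) ^ n *
          ((1 + s * (RtoC r * e k)) * Cconj (c 1%nat * (RtoC r * e k) + b * (RtoC r * e k) ^ 2)))%C).
    apply Cpsum_ext. intros n. unfold val.
    rewrite (csum_ext _ (fun k => (c n * RtoC r ^ n) * (((cc * RtoC r) * Et n 1 k
                 + (cc * s * RtoC r ^ 2) * Et (S n) 1 k)
                 + ((cb * RtoC r ^ 2) * Et n 2 k + (cb * s * RtoC r ^ 3) * Et (S n) 2 k)))%C).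
    + rewrite csum_scal, !csum_plus, !csum_scal. fold (E n 1) (E (S n) 1) (E n 2) (E (S n) 2). ring.
    + intros k _. unfold Et. rewrite Cpow_mult_l.
      rewrite !Cplus_conj, !Cmult_conj, !Cpow_conj, !Cmult_conj, !Cconj_RtoC.
      fold cc cb. rewrite (Cpow_S (e k) n).
      set (x := e k). set (xn := (x ^ n)%C). ring.
  - rewrite Cpsum_first3; [ | exact HK | ].
    + unfold val. rewrite Hc0.
      rewrite (E_diag 1), (E_diag 2), (E_offdiag 2 1), (E_offdiag 1 2), (E_offdiag 3 1),
        (E_offdiag 3 2) by lia.
      unfold b. ring.
    + intros n Hn. unfold val.
      rewrite (E_offdiag n 1), (E_offdiag (S n) 1), (E_offdiag n 2), (E_offdiag (S n) 2) by lia.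
      ring.
Qed.
End RootsOfUnityMeans.

Lemma Re_mul_conj_le x y : 2 * Re (x * Cconj y)%C - Cmod y ^ 2 <= Cmod x ^ 2.
Proof.
  rewrite !Cmod2_alt. destruct x as [x1 x2], y as [y1 y2]. unfold Re, Im, Cconj, Cmult. simpl.
  pose proof (Rle_0_sqr (x1 - y1)). pose proof (Rle_0_sqr (x2 - y2)). unfold Rsqr in *. nra.
Qed.

Lemma Re_mul_conj_scal (x : C) r n : Re (x * Cconj x * RtoC r ^ n)%C = Cmod x ^ 2 * r ^ n.
Proof. rewrite <- RtoC_pow, re_scal_r, Re_mul_conj. auto. Qed.

(* Discrete Bessel inequality on the circle [|z| = r] for [P (z) (1 + s z)], a polynomial
   whose first coefficients are [0, c1, c2 + s c1]. *)
Lemma poly_circle_bound_coefs (c : nat -> C) r s K tau :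
  c 0%nat = RtoC 0 -> (2 <= K)%nat -> 0 < r < 1 -> 0 <= tau <= 1 ->
  (forall z, Cmod z = r -> Cmod (Cpsum (fun n => c n * z ^ n)%C K) <= 1 + tau) ->
  Cmod (c 1%nat) ^ 2 * r ^ 2 + Cmod (c 2%nat + s * c 1%nat)%C ^ 2 * r ^ 4
    <= 1 + Cmod s ^ 2 * r ^ 2 + tau * (3 * (1 + Cmod s) ^ 2).
Proof.
  intros Hc0 HK Hr Htau HP.
  set (N := (K + 3)%nat). set (L := 3 * (1 + Cmod s) ^ 2).
  set (z := fun k => (RtoC r * root_of_unity N ^ k)%C).
  assert (Hz : forall k, Cmod (z k) = r).
  { intros k. unfold z. rewrite Cmod_mult, Cmod_pow, Cmod_root_of_unity, pow1, Cmod_RtoC; lra. }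
  set (P := fun x : C => Cpsum (fun n => c n * x ^ n)%C K).
  set (beta := (c 2%nat + s * c 1%nat)%C).
  set (T := fun k => (P (z k) * (1 + s * z k))%C).
  set (u := fun k => (c 1%nat * z k + beta * z k ^ 2)%C).
  assert (HT : forall k, Cmod (T k) ^ 2 <= Re ((1 + s * z k) * Cconj (1 + s * z k))%C + tau * L).
  { intros k. rewrite Re_mul_conj. unfold T. rewrite Cmod_mult.
    pose proof (HP _ (Hz k)) as Ha. fold (P (z k)) in Ha.
    assert (Hb : Cmod (1 + s * z k)%C <= 1 + Cmod s).
    { eapply Rle_trans. apply Cmod_triangle. rewrite Cmod_1, Cmod_mult, Hz.
      pose proof (Cmod_ge_0 s). nra. }
    set (a0 := Cmod (P (z k))) in *. set (b0 := Cmod (1 + s * z k)%C) in *.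
    assert (0 <= a0) by apply Cmod_ge_0. assert (0 <= b0) by apply Cmod_ge_0.
    assert (b0 ^ 2 <= (1 + Cmod s) ^ 2) by (apply pow_incr; lra).
    assert ((a0 * b0) ^ 2 <= ((1 + tau) * b0) ^ 2) by (apply pow_incr; split; nra).
    assert (0 <= (tau - tau * tau) * b0 ^ 2) by (apply Rmult_le_pos; nra).
    assert (3 * tau * b0 ^ 2 <= 3 * tau * (1 + Cmod s) ^ 2) by (apply Rmult_le_compat_l; lra).
    unfold L. nra. }
  pose proof (rsum_le (fun k => 2 * Re (T k * Cconj (u k))%C + (-1) * Re (u k * Cconj (u k))%C)
                     (fun k => 1 * Re ((1 + s * z k) * Cconj (1 + s * z k))%C + (tau * L) * 1) N
                     ltac:(intros k _; pose proof (HT k);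
                           pose proof (Re_mul_conj_le (T k) (u k)); pose proof (Re_mul_conj (u k)); lra))
    as Hsum.
  rewrite !rsum_lin, <- !Re_csum, rsum_const in Hsum.
  assert (HN : (3 <= N)%nat) by (unfold N; lia).
  unfold T, u, P, z, beta in Hsum.
  rewrite (mean_trunc_series_cross N HN c s r K HK ltac:(unfold N; lia) Hc0),
    (mean_norm2_quadratic N HN), (mean_norm2_affine N HN), !re_scal_l, !re_plus,
    !Re_mul_conj_scal, re_RtoC in Hsum.
  assert (HNp : 0 < INR N) by (apply lt_0_INR; unfold N; lia).
  fold L. unfold beta.
  apply Rmult_le_reg_l with (INR N); [exact HNp | lra].
Qed.

Lemma geom_tail_small M q eps : 0 <= M -> 0 <= q < 1 -> 0 < eps ->
  exists K, (2 <= K)%nat /\ M * q ^ S K / (1 - q) <= eps.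
Proof.
  intros HM Hq He. set (y := eps * (1 - q) / (M + 1)).
  assert (Hy : 0 < y) by (unfold y; apply Rdiv_lt_0_compat; nra).
  destruct (pow_lt_1_zero q ltac:(rewrite Rabs_pos_eq; lra) y Hy) as [N0 HN0].
  exists (N0 + 2)%nat. split. lia.
  specialize (HN0 (S (N0 + 2)) ltac:(lia)). rewrite Rabs_pos_eq in HN0 by (apply pow_le; lra).
  apply Rle_trans with (M * y / (1 - q)).
  { unfold Rdiv. apply Rmult_le_compat_r. apply Rlt_le, Rinv_0_lt_compat; lra. nra. }
  unfold y. replace (M * (eps * (1 - q) / (M + 1)) / (1 - q)) with (eps * (M / (M + 1))) by (field; lra).
  assert (M / (M + 1) <= 1).
  { apply Rmult_le_reg_r with (M + 1). lra. unfold Rdiv. rewrite Rmult_assoc, Rinv_l by lra. lra. }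
  nra.
Qed.

Lemma schwarz_circle_coefs (c : nat -> C) (w : C -> C) r s :
  series_on_U c w -> c 0%nat = RtoC 0 -> (forall z, inU z -> Cmod (w z) < 1) -> 0 < r < 1 ->
  Cmod (c 1%nat) ^ 2 * r ^ 2 + Cmod (c 2%nat + s * c 1%nat)%C ^ 2 * r ^ 4
    <= 1 + Cmod s ^ 2 * r ^ 2.
Proof.
  intros Hs Hc0 Hw Hr.
  apply Rle_plus_epsilon. intros eps He.
  set (rho := (1 + r) / 2). set (q := r / rho).
  destruct (series_coef_bound c w rho Hs ltac:(unfold rho; lra)) as [M [HM0 HM]].
  assert (Hq : 0 < q < 1).
  { unfold q, rho. split. apply Rdiv_lt_0_compat; lra.
    apply Rmult_lt_reg_r with ((1 + r) / 2). lra. unfold Rdiv at 1. rewrite Rmult_assoc, Rinv_l; lra. }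
  set (L := 3 * (1 + Cmod s) ^ 2).
  assert (HL : 0 < L) by (pose proof (Cmod_ge_0 s); unfold L; nra).
  set (mn := Rmin 1 (eps / L)).
  assert (Hmn : 0 < mn) by (unfold mn; apply Rmin_pos; [lra | apply Rdiv_lt_0_compat; lra]).
  assert (Hmn1 : mn <= 1) by apply Rmin_l.
  assert (HmnL : mn * L <= eps).
  { assert (mn <= eps / L) by apply Rmin_r.
    apply Rmult_le_reg_r with (/ L). apply Rinv_0_lt_compat; lra.
    rewrite Rmult_assoc, Rinv_r by lra. lra. }
  destruct (geom_tail_small M q mn HM0 ltac:(lra) Hmn) as [K [HK Htau]].
  set (tau := M * q ^ S K / (1 - q)) in Htau.
  assert (Htau0 : 0 <= tau).
  { unfold tau. apply Rmult_le_pos; [apply Rmult_le_pos, pow_le | apply Rlt_le, Rinv_0_lt_compat]; lra. }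
  assert (HP : forall z, Cmod z = r -> Cmod (Cpsum (fun n => c n * z ^ n)%C K) <= 1 + tau).
  { intros z Hz. assert (Hu : inU z) by (unfold inU; change (Cmod z < 1); lra).
    pose proof (series_tail_bound c w M rho K z Hs ltac:(unfold rho; lra) HM
                  ltac:(unfold rho; lra) Hu) as Htail.
    rewrite Hz in Htail. fold q tau in Htail. pose proof (Hw z Hu).
    replace (Cpsum _ K) with (w z - (w z - Cpsum (fun n => c n * z ^ n) K))%C by ring.
    pose proof (Cmod_sub_le (w z) (w z - Cpsum (fun n => c n * z ^ n) K)%C). lra. }
  pose proof (poly_circle_bound_coefs c r s K tau Hc0 HK Hr ltac:(lra) HP).
  assert (tau * L <= eps) by nra. unfold L in *. lra.
Qed.

Lemma even_poly_ineq_at_1 x y v : 0 <= x -> 0 <= y -> 0 <= v ->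
  (forall r, 0 < r < 1 -> x * r ^ 2 + y * r ^ 4 <= 1 + v * r ^ 2) -> x + y <= 1 + v.
Proof.
  intros Hx Hy Hv H. destruct (Rle_lt_dec (x + y) (1 + v)) as [|Hc]; auto. exfalso.
  set (th := (1 + v) / (x + y)).
  assert (Hth : 0 < th < 1).
  { unfold th. split. apply Rdiv_lt_0_compat; lra.
    apply Rmult_lt_reg_r with (x + y). lra. unfold Rdiv. rewrite Rmult_assoc, Rinv_l by lra. lra. }
  set (r := 1 - (1 - th) / 8).
  specialize (H r ltac:(unfold r; lra)).
  assert (Hr4 : r ^ 4 > th).
  { assert (r ^ 2 >= 1 - (1 - th) / 4) by (unfold r; nra).
    replace (r ^ 4) with ((r ^ 2) ^ 2) by ring. nra. }
  assert (Hr24 : r ^ 4 <= r ^ 2 <= 1).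
  { assert (0 <= r ^ 2 <= 1) by (unfold r; split; nra).
    replace (r ^ 4) with (r ^ 2 * r ^ 2) by ring. nra. }
  assert ((x + y) * th = 1 + v) by (unfold th; field; lra).
  nra.
Qed.

(* The Bessel inequalities at [s = mu conj(c1) c2], written in terms of
   [x = |c1|^2] and [B = |c2|^2]. *)
Lemma coef2_bound_of_family x B : 0 <= x -> 0 <= B ->
  (forall mu, 0 <= mu -> x + B * (1 + mu * x) ^ 2 <= 1 + mu ^ 2 * x * B) ->
  x <= 1 /\ B <= (1 - x) ^ 2.
Proof.
  intros Hx0 HB0 Hgen.
  assert (HA : x + B <= 1) by (specialize (Hgen 0 ltac:(lra)); simpl in Hgen; lra).
  split. lra.
  destruct (Req_dec x 1) as [E|E].
  - specialize (Hgen 1 ltac:(lra)). rewrite E in Hgen. nra.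
  - set (A := 1 - x). assert (HA0 : 0 < A) by (unfold A; lra).
    specialize (Hgen (/ A) ltac:(apply Rlt_le, Rinv_0_lt_compat; lra)).
    replace (1 + / A * x) with (/ A) in Hgen by (unfold A; field; lra).
    replace ((/ A) ^ 2) with (/ A ^ 2) in Hgen by (field; lra).
    apply Rmult_le_reg_r with (/ A ^ 2 * (1 - x)).
    { apply Rmult_lt_0_compat. apply Rinv_0_lt_compat. nra. unfold A in HA0; lra. }
    replace (A ^ 2 * (/ A ^ 2 * (1 - x))) with A by (unfold A; field; lra).
    fold A. nra.
Qed.

Lemma schwarz_coef_bound (c : nat -> C) (w : C -> C) :
  series_on_U c w -> c 0%nat = RtoC 0 -> (forall z, inU z -> Cmod (w z) < 1) ->
  Cmod (c 2%nat + c 1%nat * c 1%nat)%C <= 1.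
Proof.
  intros Hs Hc0 Hw.
  set (a := c 1%nat). set (b := c 2%nat).
  assert (Hfam : forall s, Cmod a ^ 2 + Cmod (b + s * a)%C ^ 2 <= 1 + Cmod s ^ 2).
  { intros s. apply even_poly_ineq_at_1; try (apply pow_le, Cmod_ge_0).
    intros r Hr. apply (schwarz_circle_coefs c w); auto. }
  destruct (coef2_bound_of_family (Cmod a ^ 2) (Cmod b ^ 2)) as [Hx Hb];
    try (apply pow_le, Cmod_ge_0).
  { intros mu Hmu. specialize (Hfam (RtoC mu * Cconj a * b)%C).
    replace (b + RtoC mu * Cconj a * b * a)%C with (b * RtoC (1 + mu * Cmod a ^ 2))%C in Hfam
      by (rewrite RtoC_plus, RtoC_mult, Cmod2_conj; ring).
    rewrite !Cmod_mult, !Cmod_RtoC, Cmod_conj in Hfam by (pose proof (pow2_ge_0 (Cmod a)); nra).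
    nra. }
  pose proof (Cmod_ge_0 b). pose proof (Cmod_ge_0 a).
  assert (Cmod b <= 1 - Cmod a ^ 2) by nra.
  eapply Rle_trans. apply Cmod_triangle. rewrite Cmod_mult. simpl pow in *. lra.
Qed.

Lemma bazil_subordinate_coef3_bound lam (a : nat -> C) (F Fp : C -> C) :
  0 <= 1 + 2 * lam ->
  series_on_U a F -> a 0%nat = RtoC 0 -> a 1%nat = RtoC 1 ->
  (forall z, inU z -> Cderiv F z (Fp z)) ->
  subordinate (bazil lam F Fp) phi0 ->
  (1 + 2 * lam) * Cmod (a 3%nat) <= 2.
Proof.
  intros Hlam Hs Ha0 Ha1 Hd [w [[[c Hc] [Hw0 HwU]] Heq]].
  assert (Hc0 : c 0%nat = RtoC 0) by (rewrite <- (series_on_U_at0 c w Hc); exact Hw0).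
  destruct (phi0_subordinate_coefs _ w c _ _ (bazil_remainder_bigO0 lam a F Fp Hs Ha0 Ha1 Hd)
              Hc Hc0 HwU Heq) as [_ Ha3].
  rewrite <- (Rabs_pos_eq _ Hlam), <- Cmod_R, <- Cmod_mult, RtoC_plus, RtoC_mult, Ha3, Cmod_mult,
    Cmod_R, Rabs_pos_eq by lra.
  pose proof (schwarz_coef_bound c w Hc Hc0 HwU). lra.
Qed.

Lemma inverse_series_at0 (a b : nat -> C) (f g : C -> C) r :
  series_on_U a f -> a 0%nat = RtoC 0 -> univalent_on_U f -> series_on_U b g -> 0 < r ->
  (forall w, Cnorm w < r -> inU (g w) /\ f (g w) = w) -> b 0%nat = RtoC 0.
Proof.
  intros Hf Ha0 Hunf Hg Hr Hinv.
  rewrite <- (series_on_U_at0 b g Hg).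
  assert (H0 : Cnorm (RtoC 0) < r) by (change (Cmod (RtoC 0) < r); rewrite Cmod_0; lra).
  destruct (Hinv _ H0) as [Hg0 Hfg0].
  apply Hunf; auto. apply inU_RtoC. lra.
  rewrite Hfg0, (series_on_U_at0 a f Hf). auto.
Qed.

Lemma Cmod_sub_sq_le (x y : C) :
  2 * Cmod (x - y * y)%C <= Cmod x + Cmod (2 * y * y - x)%C.
Proof.
  replace (x - y * y)%C with ((x - (2 * y * y - x)) / 2)%C by field.
  rewrite Cmod_div by (intro E; apply RtoC_inj in E; lra).
  rewrite Cmod_R, Rabs_pos_eq by lra.
  pose proof (Cmod_sub_le x (2 * y * y - x)%C). lra.
Qed.

Theorem corollary3p20 (lam : R) (a : nat -> Cplx) (f g : Cplx -> Cplx) :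
  1 <= lam ->
  in_B_Sigma lam a f g ->
  Cnorm (a 3%nat) <= 2 / (2 * lam + 1) /\
  Cnorm (Csub (a 3%nat) (Cmul (a 2%nat) (a 2%nat))) <= 2 / (2 * lam + 1).
Proof.
  intros Hl [[Ha0 [Ha1 [Hsf [Hunf [[b Hsg] [_ [r [Hr Hinv]]]]]]]] [[fp [Hfp Hsubf]] [gp [Hgp Hsubg]]]].
  assert (Hk : 0 <= 1 + 2 * lam) by lra.
  assert (Hb0 := inverse_series_at0 a b f g r Hsf Ha0 Hunf Hsg Hr Hinv).
  destruct (inverse_series_coefs a b f g r Hsf Ha0 Ha1 Hsg Hb0 Hr (fun w Hw => proj2 (Hinv w Hw)))
    as [Hb1 [_ Hb3]].
  pose proof (bazil_subordinate_coef3_bound lam a f fp Hk Hsf Ha0 Ha1 Hfp Hsubf) as Hf3.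
  pose proof (bazil_subordinate_coef3_bound lam b g gp Hk Hsg Hb0 Hb1 Hgp Hsubg) as Hg3.
  rewrite Hb3 in Hg3.
  pose proof (Cmod_sub_sq_le (a 3%nat) (a 2%nat)).
  change (Cmod (a 3%nat) <= 2 / (2 * lam + 1) /\
          Cmod (a 3%nat - a 2%nat * a 2%nat)%C <= 2 / (2 * lam + 1)).
  split; apply Rmult_le_reg_l with (2 * lam + 1); try lra;
    unfold Rdiv; rewrite <- Rmult_assoc, Rinv_r_simpl_m by lra; nra.
Qed.
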